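(* Let $(E,\langle\cdot,\cdot\rangle,\rho,\circ)$ be a pre-Courant algebroid over $M$ with Jacobiator $J$. Consider the complex $V_1=\Gamma(\operatorname{Ker}(\rho))\xrightarrow{\ i\ }V_0=\Gamma(E)$ with $i$ the inclusion, define $l_2(e_1,e_2)=e_1\circ e_2$ for $e_1,e_2\in\Gamma(E)$, $l_2(e,\kappa)=e\circ\kappa$ and $l_2(\kappa,e)=\kappa\circ e$ for $e\in\Gamma(E)$, $\kappa\in\Gamma(\operatorname{Ker}\rho)$, and $l_3(e_1,e_2,e_3)=J(e_1,e_2,e_3)$. Then $(V_1\xrightarrow{i}V_0,l_2,l_3)$ is a Leibniz 2-algebra.
   Context: A Courant vector bundle over a smooth manifold $M$ is a vector bundle $E\to M$ with a fibrewise nondegenerate symmetric bilinear form $\langle\cdot,\cdot\rangle$ and a bundle map $\rho:E\to TM$ such that $\rho\circ\rho^*=0$, where $\rho^*:T^*M\to E^*\cong E$ is the dual of $\rho$ followed by the identification $E^*\cong E$ via $\langle\cdot,\cdot\rangle$. A pre-Courant algebroid structure on it is an $\mathbb R$-bilinear operation $\circ$ on $\Gamma(E)$ such that for all $e_1,e_2,e_3\in\Gamma(E)$: (i) $\rho(e_1\circ e_2)=[\rho(e_1),\rho(e_2)]$; (ii) $\langle e_1\circ e_1,e_2\rangle=\frac12\rho(e_2)\langle e_1,e_1\rangle$; (iii) $\rho(e_1)\langle e_2,e_3\rangle=\langle e_1\circ e_2,e_3\rangle+\langle e_2,e_1\circ e_3\rangle$. The Jacobiator is $J(e_1,e_2,e_3)=e_1\circ(e_2\circ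 e_3)-(e_1\circ e_2)\circ e_3-e_2\circ(e_1\circ e_3)$. A Leibniz 2-algebra consists of a complex of vector spaces $V_1\xrightarrow{d}V_0$, a bilinear map $l_2:V_i\times V_j\to V_{i+j}$ for $i+j\le1$, and a trilinear map $l_3:V_0\times V_0\times V_0\to V_1$ such that for all $w,x,y,z\in V_0$, $m,n\in V_1$: (a1) $d\,l_2(x,m)=l_2(x,dm)$; (a2) $d\,l_2(m,x)=l_2(dm,x)$; (a3) $l_2(dm,n)=l_2(m,dn)$; (b1) $d\,l_3(x,y,z)=l_2(x,l_2(y,z))-l_2(l_2(x,y),z)-l_2(y,l_2(x,z))$; (b2) $l_3(x,y,dm)=l_2(x,l_2(y,m))-l_2(l_2(x,y),m)-l_2(y,l_2(x,m))$; (b3) $l_3(x,dm,y)=l_2(x,l_2(m,y))-l_2(l_2(x,m),y)-l_2(m,l_2(x,y))$; (b4) $l_3(dm,x,y)=l_2(m,l_2(x,y))-l_2(l_2(m,x),y)-l_2(x,l_2(m,y))$; (c) $l_2(w,l_3(x,y,z))-l_2(x,l_3(w,y,z))+l_2(y,l_3(w,x,z))+l_2(l_3(w,x,y),z)-l_3(l_2(w,x),y,z)-l_3(x,l_2(w,y),z)-l_3(x,y,l_2(w,z))+l_3(w,l_2(x,y),z)+l_3(w,y,l_2(x,z))-l_3(w,x,l_2(y,z))=0$. *)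

From HB Require Import structures.
From mathcomp Require Import all_boot all_order all_algebra.
From mathcomp Require Import boolp classical_sets functions reals.
Set Implicit Arguments. Unset Strict Implicit. Unset Printing Implicit Defensive.
Import GRing.Theory.
Local Open Scope ring_scope.

Section Multilin.
Variable R : pzRingType.

Definition lin1 (U W : lmodType R) (f : U -> W) : Prop :=
  forall (c : R) (x y : U), f (c *: x + y) = c *: f x + f y.

Definition bilin (U1 U2 W : lmodType R) (f : U1 -> U2 -> W) : Prop :=
  (forall x, lin1 (f x)) /\ (forall y, lin1 (fun x => f x y)).

Definition trilin (U1 U2 U3 W : lmodType R) (f : U1 -> U2 -> U3 -> W) : Prop :=
  [/\ forall x y, lin1 (f x y),
      forall x z, lin1 (fun y => f x y z) &
      forall y z, lin1 (fun x => f x y z)].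
End Multilin.

(* The bilinear map l2 : V_i x V_j -> V_{i+j} (i+j <= 1) is given by   *)
(* its three components l2_00 : V0xV0->V0, l2_01 : V0xV1->V1,          *)
(* l2_10 : V1xV0->V1.                                                  *)
Section Leibniz2.
Variables (R : pzRingType) (V1 V0 : lmodType R).

Record leibniz2 (d : V1 -> V0) (l2_00 : V0 -> V0 -> V0)
    (l2_01 : V0 -> V1 -> V1) (l2_10 : V1 -> V0 -> V1)
    (l3 : V0 -> V0 -> V0 -> V1) : Prop := {
  l2_d_lin : lin1 d;
  l2_00_bilin : bilin l2_00;
  l2_01_bilin : bilin l2_01;
  l2_10_bilin : bilin l2_10;
  l3_trilin : trilin l3;
  l2_a1 : forall x m, d (l2_01 x m) = l2_00 x (d m);
  l2_a2 : forall m x, d (l2_10 m x) = l2_00 (d m) x;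
  l2_a3 : forall m n, l2_01 (d m) n = l2_10 m (d n);
  l2_b1 : forall x y z,
     d (l3 x y z) = l2_00 x (l2_00 y z) - l2_00 (l2_00 x y) z - l2_00 y (l2_00 x z);
  l2_b2 : forall x y m,
     l3 x y (d m) = l2_01 x (l2_01 y m) - l2_01 (l2_00 x y) m - l2_01 y (l2_01 x m);
  l2_b3 : forall x m y,
     l3 x (d m) y = l2_01 x (l2_10 m y) - l2_10 (l2_01 x m) y - l2_10 m (l2_00 x y);
  l2_b4 : forall m x y,
     l3 (d m) x y = l2_10 m (l2_00 x y) - l2_10 (l2_10 m x) y - l2_01 x (l2_10 m y);
  l2_c : forall w x y z,
     l2_01 w (l3 x y z) - l2_01 x (l3 w y z) + l2_01 y (l3 w x z)
     + l2_10 (l3 w x y) z - l3 (l2_00 w x) y z - l3 x (l2_00 w y) z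
     - l3 x y (l2_00 w z) + l3 w (l2_00 x y) z + l3 w y (l2_00 x z)
     - l3 w x (l2_00 y z) = 0
}.
End Leibniz2.

Section Ker.
Variables (R : pzRingType) (V W : lmodType R) (rho : {linear V -> W}).

Definition kerP : pred V := fun e => `[< rho e = 0 >].

Lemma kerP_closed : subsemimod_closed kerP.
Proof.
split; [split|].
- by apply/asboolP; rewrite raddf0.
- move=> x y /asboolP Hx /asboolP Hy.
  by apply/asboolP; rewrite /= raddfD /= Hx Hy addr0.
- move=> c x /asboolP Hx.
  by apply/asboolP; rewrite /= linearZ /= Hx scaler0.
Qed.

HB.instance Definition _ := GRing.isSubmodClosed.Build R V kerP kerP_closed.
Definition kerT := {e : V | kerP e}.
HB.instance Definition _ := [isSub for (@sval V kerP : kerT -> V)].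
HB.instance Definition _ := [Choice of kerT by <:].
HB.instance Definition _ := [SubChoice_isSubLmodule of kerT by <:].

Definition kincl : kerT -> V := val.
End Ker.

(* Pre-Courant algebroids, algebraically: A plays the role of C^oo(M), *)
(* V the role of Gamma(E) (an A-module via act), vector fields are the  *)
(* R-linear derivations of A, acting on functions.                       *)
Section Courant.
Variables (R : realType) (A : comAlgType R) (V : lmodType R).

Definition is_derivation (X : A -> A) : Prop :=
  (forall (c : R) f g, X (c *: f + g) = c *: X f + X g) /\
  (forall f g, X (f * g) = X f * g + f * X g).

Definition vbracket (X Y : A -> A) : A -> A := fun f => X (Y f) - Y (X f).

Record module_action (act : A -> V -> V) : Prop := {
  act1 : forall x, act 1 x = x;
  actA : forall a b x, act (a * b) x = act a (act b x);
  actDl : forall a b x, act (a + b) x = act a x + act b x;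
  actDr : forall a x y, act a (x + y) = act a x + act a y;
  act_scal : forall (c : R) x, act (c%:A) x = c *: x
}.

Record courant_vector_bundle (act : A -> V -> V) (g : V -> V -> A)
    (rho : {linear V -> (A -> A)}) : Prop := {
  cvb_module : module_action act;
  g_sym : forall x y, g x y = g y x;
  g_Alin : forall a x x' y, g (act a x + x') y = a * g x y + g x' y;
  (* nondegenerate, and inducing the identification E^* = E *)
  g_nondeg : forall x, (forall y, g x y = 0) -> x = 0;
  g_riesz : forall phi : V -> A,
      (forall a x y, phi (act a x + y) = a * phi x + phi y) ->
      exists x, forall y, phi y = g x y;
  (* rho is a bundle map E -> TM *)
  rho_der : forall e, is_derivation (rho e);
  rho_Alin : forall a e f, rho (act a e) f = a * rho e f;
  (* rho o rho^* = 0, where <rho^*(df), e> = rho(e) f *)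
  rho_rhostar : forall f x, (forall e, g x e = rho e f) -> rho x = 0
}.

Record pre_courant (act : A -> V -> V) (g : V -> V -> A)
    (rho : {linear V -> (A -> A)}) (circ : V -> V -> V) : Prop := {
  pc_cvb : courant_vector_bundle act g rho;
  pc_bilin : bilin circ;
  pc_anchor : forall e1 e2, rho (circ e1 e2) = vbracket (rho e1) (rho e2);
  pc_sym : forall e1 e2,
      g (circ e1 e1) e2 = (2%:R^-1 : R) *: rho e2 (g e1 e1);
  pc_inv : forall e1 e2 e3,
      rho e1 (g e2 e3) = g (circ e1 e2) e3 + g e2 (circ e1 e3)
}.

Definition jacobiator (circ : V -> V -> V) (e1 e2 e3 : V) : V :=
  circ e1 (circ e2 e3) - circ (circ e1 e2) e3 - circ e2 (circ e1 e3).

(* The structure maps of the theorem. l2 with one argument in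
   Gamma(Ker rho) is e o kappa (resp. kappa o e), and l3 = J; they are
   read back into Gamma(Ker rho) with insubd (default 0 if the value is
   not in the kernel -- conditions (a1),(a2),(b1) of leibniz2 force the
   values to actually lie in the kernel). *)
Variables (rho : {linear V -> (A -> A)}) (circ : V -> V -> V).

Definition l2_EK (e : V) (k : kerT rho) : kerT rho :=
  insubd (0 : kerT rho) (circ e (kincl k)).
Definition l2_KE (k : kerT rho) (e : V) : kerT rho :=
  insubd (0 : kerT rho) (circ (kincl k) e).
Definition l3_J (e1 e2 e3 : V) : kerT rho :=
  insubd (0 : kerT rho) (jacobiator circ e1 e2 e3).
End Courant.

From HB Require Import structures.
From mathcomp Require Import all_boot all_order all_algebra.
From mathcomp Require Import boolp classical_sets functions reals.
From mathcomp Require Import ring.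
Set Implicit Arguments. Unset Strict Implicit. Unset Printing Implicit Defensive.
Import GRing.Theory.
Local Open Scope ring_scope.

(* Anchor condition (i) makes [rho] a morphism from [circ] to the commutator
   bracket of derivations.  Hence [Ker rho] absorbs [circ] on both sides, and
   [rho] maps the Jacobiator to the Jacobiator of commutators, which vanishes;
   so all structure maps of the theorem really land in [Ker rho].  Conditions
   (a) and (b) then hold by construction, and (c) is a formal identity
   satisfied by the Jacobiator of any bilinear product. *)

Section Lin1.
Variables (R : pzRingType) (U W X : lmodType R).

Lemma lin1D (f : U -> W) : lin1 f -> forall x y, f (x + y) = f x + f y.
Proof. by move=> f_lin x y; move: (f_lin 1 x y); rewrite !scale1r. Qed.

Lemma lin1_0 (f : U -> W) : lin1 f -> f 0 = 0.
Proof. by move=> f_lin; apply: (addrI (f 0)); rewrite -lin1D // !addr0. Qed.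

Lemma lin1N (f : U -> W) : lin1 f -> forall x, f (- x) = - f x.
Proof.
move=> f_lin x; apply: (addrI (f x)).
by rewrite -lin1D // !subrr lin1_0.
Qed.

Lemma lin1B (f : U -> W) : lin1 f -> forall x y, f (x - y) = f x - f y.
Proof. by move=> f_lin x y; rewrite lin1D // lin1N. Qed.

Lemma lin1_comp (f : U -> W) (g : W -> X) :
  lin1 f -> lin1 g -> lin1 (fun x => g (f x)).
Proof. by move=> f_lin g_lin c x y; rewrite f_lin g_lin. Qed.

Lemma lin1_sub (f g : U -> W) :
  lin1 f -> lin1 g -> lin1 (fun x => f x - g x).
Proof.
by move=> f_lin g_lin c x y; rewrite f_lin g_lin scalerBr opprD addrACA.
Qed.

Lemma val_lin1 (S : pred W) (K : subLmodType S) : lin1 (val : K -> W).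
Proof. by move=> c x y; rewrite linearP. Qed.

Lemma lin1_val_eq (S : pred W) (K : subLmodType S) (f : U -> K) (h : U -> W) :
  (forall x, val (f x) = h x) -> lin1 h -> lin1 f.
Proof.
by move=> fh h_lin c x y; apply: val_inj; rewrite fh h_lin -!fh val_lin1.
Qed.

End Lin1.
Arguments val_lin1 {R W S K}.

(* Cancellation in an abelian group: to prove [a + r = 0] for a right-nested
   sum, move [- a] (or [a], when the head is [- a]) to the front of [r] and
   drop the pair; repeat until [0 = 0]. *)
Lemma addr_pull_last (V : zmodType) (t : V) : t = t + 0.
Proof. by rewrite addr0. Qed.
Lemma addr_pull_next (V : zmodType) (t y z z' : V) :
  z = t + z' -> y + z = t + (y + z').
Proof. by move=> ->; rewrite addrCA. Qed.
Lemma addr_cancel_head (V : zmodType) (a r r' : V) :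
  r = - a + r' -> r' = 0 -> a + r = 0.
Proof. by move=> -> ->; rewrite addr0 subrr. Qed.
Lemma addr_cancel_oppr_head (V : zmodType) (a r r' : V) :
  r = a + r' -> r' = 0 -> - a + r = 0.
Proof. by move=> -> ->; rewrite addr0 addNr. Qed.

Ltac pull_term :=
  repeat first [ reflexivity | apply: addr_pull_last
               | eapply addr_pull_next ].
Ltac cancel_terms :=
  repeat first [ eapply addr_cancel_oppr_head; [pull_term|]
               | eapply addr_cancel_head; [pull_term|] ];
  try reflexivity.

Section Jacobiator.
Variables (R : realType) (V : lmodType R) (circ : V -> V -> V).
Hypothesis circ_bilin : bilin circ.

Lemma circDr a b c : circ a (b + c) = circ a b + circ a c.
Proof. exact: lin1D (circ_bilin.1 a) _ _. Qed.

Lemma circDl a b c : circ (a + b) c = circ a c + circ b c.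
Proof. exact: lin1D (circ_bilin.2 c) _ _. Qed.

Lemma circNr a b : circ a (- b) = - circ a b.
Proof. exact: lin1N (circ_bilin.1 a) _. Qed.

Lemma circNl a b : circ (- a) b = - circ a b.
Proof. exact: lin1N (circ_bilin.2 b) _. Qed.

Lemma jacobiator_trilin : trilin (jacobiator circ).
Proof.
have [lin_r lin_l] := circ_bilin.
split=> [x y | x z | y z].
- exact: lin1_sub (lin1_sub (lin1_comp (lin_r y) (lin_r x)) (lin_r (circ x y)))
                  (lin1_comp (lin_r x) (lin_r y)).
- exact: lin1_sub (lin1_sub (lin1_comp (lin_l z) (lin_r x))
                            (lin1_comp (lin_r x) (lin_l z)))
                  (lin_l (circ x z)).
- exact: lin1_sub (lin1_sub (lin_l (circ y z)) (lin1_comp (lin_l y) (lin_l z)))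
                  (lin1_comp (lin_l z) (lin_r y)).
Qed.

Lemma jacobiator_coherence w x y z :
  circ w (jacobiator circ x y z) - circ x (jacobiator circ w y z)
  + circ y (jacobiator circ w x z) + circ (jacobiator circ w x y) z
  - jacobiator circ (circ w x) y z - jacobiator circ x (circ w y) z
  - jacobiator circ x y (circ w z) + jacobiator circ w (circ x y) z
  + jacobiator circ w y (circ x z) - jacobiator circ w x (circ y z) = 0.
Proof.
rewrite /jacobiator !(circDr, circDl, circNr, circNl) !opprD !opprK -!addrA.
cancel_terms.
Qed.

End Jacobiator.

Section Commutator.
Variables (R : realType) (A : comAlgType R).

Lemma zero_fun_app (f : A) : (0 : A -> A) f = 0.
Proof. by []. Qed.

Lemma vbracket_jacobi (X Y Z : A -> A) :
  lin1 X -> lin1 Y -> lin1 Z ->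
  vbracket X (vbracket Y Z) - vbracket (vbracket X Y) Z
  - vbracket Y (vbracket X Z) = 0.
Proof.
move=> X_lin Y_lin Z_lin; apply/funext => f.
rewrite /vbracket !fctE /= zero_fun_app.
by rewrite !(lin1B X_lin, lin1B Y_lin, lin1B Z_lin); ring.
Qed.

Lemma vbracket0l (X : A -> A) : lin1 X -> vbracket 0 X = 0.
Proof.
move=> X_lin; apply/funext => f.
by rewrite /vbracket !zero_fun_app (lin1_0 X_lin) subrr.
Qed.

Lemma vbracket0r (X : A -> A) : lin1 X -> vbracket X 0 = 0.
Proof.
move=> X_lin; apply/funext => f.
by rewrite /vbracket !zero_fun_app (lin1_0 X_lin) subrr.
Qed.

End Commutator.

Section KernelOfAnchor.
Variables (R : realType) (A : comAlgType R) (V : lmodType R).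
Variables (rho : {linear V -> (A -> A)}) (circ : V -> V -> V).
Hypothesis rho_lin : forall e, lin1 (rho e).
Hypothesis rho_circ : forall e1 e2,
  rho (circ e1 e2) = vbracket (rho e1) (rho e2).

Lemma kerP_circl k e : kerP rho k -> kerP rho (circ k e).
Proof.
by move=> /asboolP k0; apply/asboolP; rewrite rho_circ k0 (vbracket0l (rho_lin e)).
Qed.

Lemma kerP_circr e k : kerP rho k -> kerP rho (circ e k).
Proof.
by move=> /asboolP k0; apply/asboolP; rewrite rho_circ k0 (vbracket0r (rho_lin e)).
Qed.

Lemma kerP_jacobiator x y z : kerP rho (jacobiator circ x y z).
Proof.
apply/asboolP; rewrite /jacobiator !raddfB /= !rho_circ.
exact: vbracket_jacobi (rho_lin x) (rho_lin y) (rho_lin z).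
Qed.

Lemma l2_EK_val e (k : kerT rho) : val (l2_EK circ e k) = circ e (val k).
Proof. by rewrite insubdK //; apply: kerP_circr; apply: valP. Qed.

Lemma l2_KE_val (k : kerT rho) e : val (l2_KE circ k e) = circ (val k) e.
Proof. by rewrite insubdK //; apply: kerP_circl; apply: valP. Qed.

Lemma l3_J_val x y z : val (l3_J rho circ x y z) = jacobiator circ x y z.
Proof. by rewrite insubdK //; apply: kerP_jacobiator. Qed.

Hypothesis circ_bilin : bilin circ.

Lemma l2_EK_bilin : bilin (l2_EK circ : V -> kerT rho -> kerT rho).
Proof.
split=> [e | k].
- exact: lin1_val_eq (l2_EK_val e) (lin1_comp val_lin1 (circ_bilin.1 e)).
- exact: lin1_val_eq (l2_EK_val^~ k) (circ_bilin.2 (val k)).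
Qed.

Lemma l2_KE_bilin : bilin (l2_KE circ : kerT rho -> V -> kerT rho).
Proof.
split=> [k | e].
- exact: lin1_val_eq (l2_KE_val k) (circ_bilin.1 (val k)).
- exact: lin1_val_eq (l2_KE_val^~ e) (lin1_comp val_lin1 (circ_bilin.2 e)).
Qed.

Lemma l3_J_trilin : trilin (l3_J rho circ).
Proof.
have [lin_z lin_y lin_x] := jacobiator_trilin circ_bilin.
split=> [x y | x z | y z].
- exact: lin1_val_eq (l3_J_val x y) (lin_z x y).
- exact: lin1_val_eq (l3_J_val x^~ z) (lin_y x z).
- exact: lin1_val_eq (fun x => l3_J_val x y z) (lin_x y z).
Qed.

End KernelOfAnchor.

Theorem theorem4p1 (R : realType) (A : comAlgType R) (V : lmodType R)
    (act : A -> V -> V) (g : V -> V -> A) (rho : {linear V -> (A -> A)})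
    (circ : V -> V -> V) :
  pre_courant act g rho circ ->
  leibniz2 (@kincl R V (A -> A) rho) circ (@l2_EK R A V rho circ)
    (@l2_KE R A V rho circ) (@l3_J R A V rho circ).
Proof.
move=> P.
have circ_bilin := pc_bilin P.
have rho_lin e : lin1 (rho e) := (rho_der (pc_cvb P) e).1.
have rho_circ := pc_anchor P.
have EK := l2_EK_val rho_lin rho_circ.
have KE := l2_KE_val rho_lin rho_circ.
have J := l3_J_val rho_lin rho_circ.
split; rewrite /kincl.
- exact: val_lin1.
- exact: circ_bilin.
- exact: l2_EK_bilin.
- exact: l2_KE_bilin.
- exact: l3_J_trilin.
- by move=> x m; rewrite EK.
- by move=> m x; rewrite KE.
- by move=> m n; apply: val_inj; rewrite [LHS]EK [RHS]KE.
- by move=> x y z; rewrite J.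
- by move=> x y m; apply: val_inj; rewrite !raddfB /= J !EK.
- by move=> x m y; apply: val_inj; rewrite !raddfB /= J EK !KE EK.
- by move=> m x y; apply: val_inj; rewrite !raddfB /= J !(EK, KE).
- move=> w x y z; apply: val_inj.
  rewrite !(raddfD, raddfB) raddf0 /= !(EK, KE, J).
  exact: jacobiator_coherence.
Qed.
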